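(* Let $D=\{(x,z):\ -1<z<0,\ -1<x<z+1\}$, and for $\lambda\in(\tfrac12,\tfrac45)$ let $a=\sqrt{\lambda/(1-\lambda)}$, $P(\lambda)=\{(x,z):\ a-3+\tfrac1a<z-\tfrac{x}{a}<1-a+\tfrac1a,\ 1-a-\tfrac1a<z+\tfrac{x}{a}<a-1-\tfrac1a\}$, $S(\lambda)=\partial P(\lambda)$, and $\chi(x,z,\lambda)$ the indicator of $P(\lambda)$ in $D$. Let $\tfrac12<\lambda_*<\lambda_{**}<\tfrac45$, $\sigma_0\in C^1[\tfrac12,\tfrac45]$, $$\psi(x,z,t)=\int_{\lambda_*}^{\lambda_{**}}\cos(\sqrt\lambda\,t)\,\sigma_0(\lambda)\chi(x,z,\lambda)\,d\lambda,$$ and define $\mathbf U=(u,v,w)$ by $u=-\psi_z$, $v(x,z,t)=\int_0^t\psi_z(x,z,s)\,ds$, $w=\psi_x$. Then $\mathbf U(x,z,t)=\mathbf 0$ for all $t$ and all $(x,z)$ in the open set $D\setminus\bigcup_{\mu\in[\lambda_*,\lambda_{**}]}S(\mu)$ (i.e. in each of the subdomains $D_9,\dots,D_{13}$).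
   Context: The boundaries $S(\lambda_* )$ and $S(\lambda_{**})$ divide $D$ into subdomains $D_1,\dots,D_{13}$; the subdomains $D_9,\dots,D_{13}$ are the connected components of $D\setminus\bigcup_{\mu\in[\lambda_*,\lambda_{**}]}S(\mu)$: $D_9$ is the inner region (contained in every $P(\mu)$), and $D_{10},\dots,D_{13}$ are the regions outside every $P(\mu)$, $\mu\in[\lambda_*,\lambda_{**}]$. $\mathbf U$ is the velocity field of the inertial wave (solution of the linearized rotating-fluid system $u_t=v-p_x$, $v_t=-u$, $w_t=-p_z$, $u_x+w_z=0$, $un_1+wn_3=0$ on $\partial D$) associated with the stream function $\psi$. *)

From Stdlib Require Import Reals Lra ClassicalEpsilon.
From Coquelicot Require Import Coquelicot.
Open Scope R_scope.

Definition inD (x z : R) : Prop := -1 < z < 0 /\ -1 < x < z + 1.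

Definition a_of (lam : R) : R := sqrt (lam / (1 - lam)).

Definition inP (lam x z : R) : Prop :=
  let a := a_of lam in
  a - 3 + / a < z - x / a < 1 - a + / a /\
  1 - a - / a < z + x / a < a - 1 - / a.

(* S(lambda) = boundary of P(lambda): every neighbourhood of (x,z) meets both
   P(lambda) and its complement (neighbourhoods taken as sup-norm squares,
   which generate the usual topology of R^2). *)
Definition inS (lam x z : R) : Prop :=
  forall eps : R, 0 < eps ->
    (exists x' z', Rabs (x' - x) < eps /\ Rabs (z' - z) < eps /\ inP lam x' z') /\
    (exists x' z', Rabs (x' - x) < eps /\ Rabs (z' - z) < eps /\ ~ inP lam x' z').

Definition chi (x z lam : R) : R :=
  if excluded_middle_informative (inD x z /\ inP lam x z) then 1 else 0.

(* f is C^1 on the closed interval [a,b]: there is a derivative f' on [a,b]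
   (one-sided at the endpoints, i.e. the difference quotient is taken within
   [a,b]) and f' is continuous on [a,b] (relative to [a,b]). *)
Definition C1_on (a b : R) (f : R -> R) : Prop :=
  exists f' : R -> R,
    (forall x, a <= x <= b -> forall eps, 0 < eps -> exists delta, 0 < delta /\
       forall y, a <= y <= b -> y <> x -> Rabs (y - x) < delta ->
         Rabs ((f y - f x) / (y - x) - f' x) < eps) /\
    (forall x, a <= x <= b -> forall eps, 0 < eps -> exists delta, 0 < delta /\
       forall y, a <= y <= b -> Rabs (y - x) < delta ->
         Rabs (f' y - f' x) < eps).

Definition psi (sigma0 : R -> R) (ls lss : R) (x z t : R) : R :=
  RInt (fun lam => cos (sqrt lam * t) * sigma0 lam * chi x z lam) ls lss.

Definition u_fld sigma0 ls lss (x z t : R) : R :=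
  - Derive (fun z' => psi sigma0 ls lss x z' t) z.
Definition v_fld sigma0 ls lss (x z t : R) : R :=
  RInt (fun s => Derive (fun z' => psi sigma0 ls lss x z' s) z) 0 t.
Definition w_fld sigma0 ls lss (x z t : R) : R :=
  Derive (fun x' => psi sigma0 ls lss x' z t) x.

From Stdlib Require Import Reals Lra ClassicalEpsilon.
From Coquelicot Require Import Coquelicot.
Open Scope R_scope.

(* In the coordinates (z - x/a, z + x/a) the parallelogram P(lambda) is an open
   rectangle, and the signed margin m(lambda) of (x,z), the least of the four
   gaps between these coordinates and the rectangle's bounds, is positive
   exactly inside P(lambda), vanishes only on S(lambda), depends continuously
   on lambda and is 2-Lipschitz in (x,z).  Away from every S(mu), mu in
   [lambda_*, lambda_**], compactness bounds |m| below by some c > 0, so on a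
   square of size c/2 around (x,z) no chi(., ., lambda) changes.  Hence
   psi(., ., t) is locally constant and all its partial derivatives vanish. *)

Lemma Rmin_close a b a' b' e :
  Rabs (a' - a) < e -> Rabs (b' - b) < e -> Rabs (Rmin a' b' - Rmin a b) < e.
Proof.
  intros Ha Hb. apply Rabs_def2 in Ha, Hb. apply Rabs_def1;
    unfold Rmin; destruct (Rle_dec a b), (Rle_dec a' b'); lra.
Qed.

Lemma Rmin_concave s a b a' b' : 0 <= s <= 1 ->
  (1 - s) * Rmin a b + s * Rmin a' b' <= Rmin ((1 - s) * a + s * a') ((1 - s) * b + s * b').
Proof.
  intros Hs.
  pose proof (Rmin_l a b). pose proof (Rmin_r a b).
  pose proof (Rmin_l a' b'). pose proof (Rmin_r a' b').
  apply Rmin_glb; nra.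
Qed.

Lemma continuous_Rmin (f g : R -> R) (l : R) :
  continuous f l -> continuous g l -> continuous (fun y => Rmin (f y) (g y)) l.
Proof.
  intros Hf Hg. apply filterlim_locally. intros eps.
  apply filterlim_locally with (eps := eps) in Hf, Hg.
  apply (filter_imp _ _ (fun y Hy => Rmin_close _ _ _ _ _ (proj1 Hy) (proj2 Hy))).
  exact (filter_and _ _ Hf Hg).
Qed.

Lemma sign_stable m m' c : c <= Rabs m -> Rabs (m' - m) < c -> (0 < m' <-> 0 < m).
Proof.
  intros Hm Hm'. apply Rabs_def2 in Hm'.
  destruct (Rle_or_lt 0 m).
  - rewrite Rabs_pos_eq in Hm by lra. lra.
  - rewrite Rabs_left in Hm by lra. lra.
Qed.

Lemma is_derive_locally_constant (f : R -> R) y d :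
  0 < d -> (forall y', Rabs (y' - y) < d -> f y' = f y) -> is_derive f y 0.
Proof.
  intros Hd Hf. apply is_derive_ext_loc with (f := fun _ => f y).
  - exists (mkposreal d Hd). intros y' Hy'. symmetry. exact (Hf y' Hy').
  - exact (@is_derive_const R_AbsRing R_NormedModule (f y) y).
Qed.

Definition interval_margin (lo hi w : R) : R := Rmin (w - lo) (hi - w).

Lemma interval_margin_pos lo hi w : 0 < interval_margin lo hi w <-> lo < w < hi.
Proof.
  unfold interval_margin. split; intros H.
  - apply Rmin_Rgt in H. lra.
  - apply Rmin_Rgt. lra.
Qed.

Lemma interval_margin_close lo hi w w' e :
  Rabs (w' - w) < e -> Rabs (interval_margin lo hi w' - interval_margin lo hi w) < e.
Proof.
  intros Hw. apply Rmin_close.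
  - now replace (w' - lo - (w - lo)) with (w' - w) by ring.
  - now replace (hi - w' - (hi - w)) with (- (w' - w)) by ring; rewrite Rabs_Ropp.
Qed.

Lemma interval_margin_concave lo hi w w' s : 0 <= s <= 1 ->
  (1 - s) * interval_margin lo hi w + s * interval_margin lo hi w'
  <= interval_margin lo hi ((1 - s) * w + s * w').
Proof.
  intros Hs. unfold interval_margin.
  replace ((1 - s) * w + s * w' - lo) with ((1 - s) * (w - lo) + s * (w' - lo)) by ring.
  replace (hi - ((1 - s) * w + s * w')) with ((1 - s) * (hi - w) + s * (hi - w')) by ring.
  now apply Rmin_concave.
Qed.

Definition box_margin (a x z : R) : R :=
  Rmin (interval_margin (a - 3 + / a) (1 - a + / a) (z - x / a))
       (interval_margin (1 - a - / a) (a - 1 - / a) (z + x / a)).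

Lemma inP_iff_box_margin_pos lam x z : inP lam x z <-> 0 < box_margin (a_of lam) x z.
Proof.
  unfold inP, box_margin. rewrite <- 2!interval_margin_pos.
  split; intros H.
  - apply Rmin_Rgt. lra.
  - apply Rmin_Rgt in H. lra.
Qed.

Lemma box_margin_close a x z x' z' d : 1 <= a ->
  Rabs (x' - x) < d -> Rabs (z' - z) < d ->
  Rabs (box_margin a x' z' - box_margin a x z) < 2 * d.
Proof.
  intros Ha Hx Hz. apply Rabs_def2 in Hx, Hz.
  assert (Hinv : 0 < / a <= 1).
  { split; [apply Rinv_0_lt_compat | rewrite <- Rinv_1; apply Rinv_le_contravar]; lra. }
  assert (Hr : - d < (x' - x) / a < d) by (unfold Rdiv; split; nra).
  apply Rmin_close; apply interval_margin_close; apply Rabs_def1;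
    (replace (x' / a) with (x / a + (x' - x) / a) by (field; lra)); lra.
Qed.

Lemma box_margin_concave a x z x' z' s : a <> 0 -> 0 <= s <= 1 ->
  (1 - s) * box_margin a x z + s * box_margin a x' z'
  <= box_margin a ((1 - s) * x + s * x') ((1 - s) * z + s * z').
Proof.
  intros Ha Hs. unfold box_margin.
  replace ((1 - s) * z + s * z' - ((1 - s) * x + s * x') / a)
    with ((1 - s) * (z - x / a) + s * (z' - x' / a)) by (field; auto).
  replace ((1 - s) * z + s * z' + ((1 - s) * x + s * x') / a)
    with ((1 - s) * (z + x / a) + s * (z' + x' / a)) by (field; auto).
  eapply Rle_trans; [apply Rmin_concave; exact Hs |].
  eapply Rle_trans; [apply Rle_min_compat_r | apply Rle_min_compat_l];
    apply interval_margin_concave; exact Hs.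
Qed.

(* The point ((a-2)/2, -1/2) is the centre of P(lambda). *)
Lemma box_margin_center_pos a : 1 < a < 2 -> 0 < box_margin a ((a - 2) / 2) (-1/2).
Proof.
  intros Ha. unfold box_margin. apply Rmin_glb_lt; apply interval_margin_pos.
  - replace (-1/2 - (a - 2) / 2 / a) with (-1 + / a) by (field; lra). lra.
  - replace (-1/2 + (a - 2) / 2 / a) with (- / a) by (field; lra). lra.
Qed.

Lemma continuous_box_margin a x z : 0 < a -> continuous (fun b => box_margin b x z) a.
Proof.
  intros Ha. unfold box_margin, interval_margin.
  repeat apply continuous_Rmin;
    apply (@ex_derive_continuous R_AbsRing R_NormedModule); auto_derive; lra.
Qed.

Lemma a_of_bounds lam : 1/2 < lam < 4/5 -> 1 < a_of lam < 2.
Proof.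
  intros H. unfold a_of.
  assert (Hq : 1 < lam / (1 - lam) < 2 * 2).
  { assert (lam / (1 - lam) * (1 - lam) = lam) by (field; lra). split; nra. }
  split.
  - rewrite <- sqrt_1 at 1. apply sqrt_lt_1_alt. lra.
  - rewrite <- (sqrt_square 2) by lra. apply sqrt_lt_1_alt. lra.
Qed.

Lemma continuous_a_of lam : 0 < lam < 1 -> continuous a_of lam.
Proof.
  intros H. apply (@ex_derive_continuous R_AbsRing R_NormedModule).
  assert (0 < lam / (1 - lam)) by (apply Rdiv_lt_0_compat; lra).
  unfold a_of. auto_derive. repeat split; auto; lra.
Qed.

Lemma segment_point_near x z x0 z0 eps : 0 < eps ->
  exists s, 0 < s <= 1 /\ Rabs (s * (x0 - x)) < eps /\ Rabs (s * (z0 - z)) < eps.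
Proof.
  intros Heps.
  pose proof (Rabs_pos (x0 - x)). pose proof (Rabs_pos (z0 - z)).
  set (K := eps + Rabs (x0 - x) + Rabs (z0 - z)).
  exists (eps / K).
  assert (HK : eps / K * K = eps) by (unfold K; field; lra).
  assert (0 < eps / K) by (apply Rdiv_lt_0_compat; unfold K; lra).
  rewrite !Rabs_mult, (Rabs_pos_eq (eps / K)) by lra.
  unfold K in HK |- *. repeat split; nra.
Qed.

Lemma box_margin_zero_inS lam x z :
  1 < a_of lam < 2 -> box_margin (a_of lam) x z = 0 -> inS lam x z.
Proof.
  intros Ha H0 eps Heps. set (a := a_of lam) in *. split.
  - destruct (segment_point_near x z ((a - 2) / 2) (-1/2) eps Heps) as (s & Hs & Hx & Hz).
    exists ((1 - s) * x + s * ((a - 2) / 2)), ((1 - s) * z + s * (-1/2)).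
    replace ((1 - s) * x + s * ((a - 2) / 2) - x) with (s * ((a - 2) / 2 - x)) by ring.
    replace ((1 - s) * z + s * (-1/2) - z) with (s * (-1/2 - z)) by ring.
    split; [exact Hx | split; [exact Hz |]].
    apply inP_iff_box_margin_pos. fold a.
    pose proof (box_margin_center_pos a Ha).
    eapply Rlt_le_trans; [| apply box_margin_concave; lra].
    rewrite H0. nra.
  - exists x, z. rewrite 2!Rminus_diag, Rabs_R0, inP_iff_box_margin_pos.
    fold a. rewrite H0. split; [| split]; lra.
Qed.

Lemma box_margin_bounded_away ls lss x z :
  1/2 < ls -> ls <= lss -> lss < 4/5 ->
  (forall mu, ls <= mu <= lss -> ~ inS mu x z) ->
  exists c, 0 < c /\ forall lam, ls <= lam <= lss -> c <= Rabs (box_margin (a_of lam) x z).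
Proof.
  intros H1 H2 H3 HS.
  destruct (continuity_ab_min (fun l => Rabs (box_margin (a_of l) x z)) ls lss H2)
    as (mu & Hmin & Hmu).
  - intros l Hl. apply continuity_pt_filterlim.
    apply (continuous_Rabs_comp (fun l => box_margin (a_of l) x z)).
    apply (continuous_comp a_of (fun b => box_margin b x z)).
    + apply continuous_a_of. lra.
    + apply continuous_box_margin. pose proof (a_of_bounds l). lra.
  - exists (Rabs (box_margin (a_of mu) x z)). split; [| exact Hmin].
    destruct (Rabs_pos (box_margin (a_of mu) x z)) as [Hpos | Hzero]; [exact Hpos |].
    exfalso. apply (HS mu Hmu), box_margin_zero_inS.
    + apply a_of_bounds. lra.
    + apply Rabs_eq_0. auto.
Qed.

Lemma inD_open x z : inD x z ->
  exists d, 0 < d /\ forall x' z', Rabs (x' - x) < d -> Rabs (z' - z) < d -> inD x' z'.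
Proof.
  intros ((Hz1 & Hz2) & Hx1 & Hx2).
  exists (Rmin (Rmin (z + 1) (- z)) (Rmin (x + 1) (z + 1 - x)) / 2).
  pose proof (Rmin_l (z + 1) (- z)). pose proof (Rmin_r (z + 1) (- z)).
  pose proof (Rmin_l (x + 1) (z + 1 - x)). pose proof (Rmin_r (x + 1) (z + 1 - x)).
  pose proof (Rmin_l (Rmin (z + 1) (- z)) (Rmin (x + 1) (z + 1 - x))).
  pose proof (Rmin_r (Rmin (z + 1) (- z)) (Rmin (x + 1) (z + 1 - x))).
  split.
  - apply Rdiv_lt_0_compat; [repeat apply Rmin_pos |]; lra.
  - intros x' z' Hx Hz. apply Rabs_def2 in Hx, Hz. unfold inD. repeat split; lra.
Qed.

Lemma chi_ext x z x' z' lam :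
  (inD x' z' <-> inD x z) -> (inP lam x' z' <-> inP lam x z) -> chi x' z' lam = chi x z lam.
Proof.
  intros HD HP. unfold chi.
  destruct (excluded_middle_informative (inD x' z' /\ inP lam x' z')),
           (excluded_middle_informative (inD x z /\ inP lam x z)); tauto.
Qed.

Lemma chi_locally_constant ls lss x z :
  1/2 < ls -> ls <= lss -> lss < 4/5 -> inD x z ->
  (forall mu, ls <= mu <= lss -> ~ inS mu x z) ->
  exists d, 0 < d /\ forall x' z', Rabs (x' - x) < d -> Rabs (z' - z) < d ->
    forall lam, ls <= lam <= lss -> chi x' z' lam = chi x z lam.
Proof.
  intros H1 H2 H3 HD HS.
  destruct (box_margin_bounded_away ls lss x z H1 H2 H3 HS) as (c & Hc & Hm).
  destruct (inD_open x z HD) as (dD & HdD & HD').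
  exists (Rmin (c / 2) dD). split; [apply Rmin_pos; lra |].
  intros x' z' Hx Hz lam Hlam.
  pose proof (Rmin_l (c / 2) dD). pose proof (Rmin_r (c / 2) dD).
  apply chi_ext.
  - split; intros; [exact HD | apply HD'; lra].
  - rewrite 2!inP_iff_box_margin_pos.
    apply (sign_stable _ _ c (Hm lam Hlam)).
    replace c with (2 * (c / 2)) by field.
    apply box_margin_close; try lra.
    pose proof (a_of_bounds lam). lra.
Qed.

Lemma psi_locally_constant sigma0 ls lss x z :
  1/2 < ls -> ls <= lss -> lss < 4/5 -> inD x z ->
  (forall mu, ls <= mu <= lss -> ~ inS mu x z) ->
  exists d, 0 < d /\ forall x' z' t, Rabs (x' - x) < d -> Rabs (z' - z) < d ->
    psi sigma0 ls lss x' z' t = psi sigma0 ls lss x z t.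
Proof.
  intros H1 H2 H3 HD HS.
  destruct (chi_locally_constant ls lss x z H1 H2 H3 HD HS) as (d & Hd & Hchi).
  exists d. split; [exact Hd |].
  intros x' z' t Hx Hz. unfold psi. apply RInt_ext.
  intros lam Hlam. rewrite Rmin_left, Rmax_right in Hlam by lra.
  rewrite (Hchi x' z' Hx Hz lam) by lra. reflexivity.
Qed.

Theorem theorem3p1 (ls lss : R) (sigma0 : R -> R) :
  1/2 < ls -> ls < lss -> lss < 4/5 ->
  C1_on (1/2) (4/5) sigma0 ->
  forall x z : R,
    inD x z ->
    (forall mu : R, ls <= mu <= lss -> ~ inS mu x z) ->
    forall t : R,
      ex_derive (fun z' => psi sigma0 ls lss x z' t) z /\
      ex_derive (fun x' => psi sigma0 ls lss x' z t) x /\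
      (forall s : R, ex_derive (fun z' => psi sigma0 ls lss x z' s) z) /\
      u_fld sigma0 ls lss x z t = 0 /\
      v_fld sigma0 ls lss x z t = 0 /\
      w_fld sigma0 ls lss x z t = 0.
Proof.
  intros H1 H2 H3 _ x z HD HS t.
  destruct (psi_locally_constant sigma0 ls lss x z H1 (Rlt_le _ _ H2) H3 HD HS)
    as (d & Hd & Hpsi).
  assert (Hd0 : Rabs 0 < d) by (rewrite Rabs_R0; exact Hd).
  assert (Dz : forall s, is_derive (fun z' => psi sigma0 ls lss x z' s) z 0).
  { intros s. apply (is_derive_locally_constant _ z d Hd). intros z' Hz.
    apply Hpsi; [rewrite Rminus_diag |]; assumption. }
  assert (Dx : is_derive (fun x' => psi sigma0 ls lss x' z t) x 0).
  { apply (is_derive_locally_constant _ x d Hd). intros x' Hx.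
    apply Hpsi; [| rewrite Rminus_diag]; assumption. }
  assert (Dz0 : forall s, Derive (fun z' => psi sigma0 ls lss x z' s) z = 0)
    by (intros s; exact (is_derive_unique _ _ _ (Dz s))).
  assert (Dx0 : Derive (fun x' => psi sigma0 ls lss x' z t) x = 0)
    by exact (is_derive_unique _ _ _ Dx).
  refine (conj (ex_intro _ 0 (Dz t)) (conj (ex_intro _ 0 Dx)
    (conj (fun s => ex_intro _ 0 (Dz s)) (conj _ (conj _ _))))).
  - unfold u_fld. rewrite Dz0. ring.
  - unfold v_fld. rewrite (RInt_ext _ (fun _ => 0)) by (intros s _; apply Dz0).
    rewrite RInt_const. exact (Rmult_0_r (t - 0)).
  - exact Dx0.
Qed.
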